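(* Let $\mathcal X,\mathcal U$ be finite nonempty sets, $f:\mathcal X\times\mathcal U\to\mathcal X$ and $\ell,g:\mathcal X\to\mathbb R$, and let $$v_{\mathrm{RAA}}^*(x)=\max_{\mathbf u\in\mathbb U}\min\Big\{\max_{\tau\in\mathbb N}\ell(\xi_x^{\mathbf u}(\tau)),\min_{\kappa\in\mathbb N}g(\xi_x^{\mathbf u}(\kappa))\Big\}.$$ Then there is an augmented policy $\bar\pi\in\overline\Pi$ such that for all $x\in\mathcal X$, $$v_{\mathrm{RAA}}^*(x)=\min\Big\{\max_{\tau\in\mathbb N}\ell(\bar\xi_x^{\bar\pi}(\tau)),\min_{\tau\in\mathbb N}g(\bar\xi_x^{\bar\pi}(\tau))\Big\}.$$
   Context: $\mathbb N=\{0,1,\dots\}$; $\mathbb U$ is the set of sequences $\mathbb N\to\mathcal U$; for $\mathbf u\in\mathbb U$: $\xi_x^{\mathbf u}(0)=x$, $\xi_x^{\mathbf u}(t+1)=f(\xi_x^{\mathbf u}(t),\mathbf u(t))$. Let $\mathcal Y=\{\ell(x):x\in\mathcal X\}$, $\mathcal Z=\{g(x):x\in\mathcal X\}$ and $\overline\Pi$ the set of maps $\bar\pi:\mathcal X\times\mathcal Y\times\mathcal Z\to\mathcal U$. For $\bar\pi\in\overline\Pi$, define $\bar\xi_x^{\bar\pi}(0)=x$, $\bar y_x^{\bar\pi}(0)=\ell(x)$, $\bar z_x^{\bar\pi}(0)=g(x)$, $\bar\xi_x^{\bar\pi}(t+1)=f\big(\bar\xi_x^{\bar\pi}(t),\bar\pi(\bar\xi_x^{\bar\pi}(t),\bar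 y_x^{\bar\pi}(t),\bar z_x^{\bar\pi}(t))\big)$, $\bar y_x^{\bar\pi}(t+1)=\max\{\ell(\bar\xi_x^{\bar\pi}(t+1)),\bar y_x^{\bar\pi}(t)\}$, $\bar z_x^{\bar\pi}(t+1)=\min\{g(\bar\xi_x^{\bar\pi}(t+1)),\bar z_x^{\bar\pi}(t)\}$. *)

From HB Require Import structures.
From mathcomp Require Import all_boot all_order all_algebra.
From mathcomp Require Import all_classical all_reals.
Set Implicit Arguments. Unset Strict Implicit. Unset Printing Implicit Defensive.
Import Order.TTheory GRing.Theory Num.Theory.
Local Open Scope ring_scope.
Local Open Scope classical_set_scope.

Section RAA.
Variables (R : realType) (X U : finType) (f : X -> U -> X) (l g : X -> R).

Fixpoint traj (x : X) (u : nat -> U) (t : nat) : X :=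
  match t with
  | 0 => x
  | t'.+1 => f (traj x u t') (u t')
  end.

(* max over tau of l(xi(tau)) -- attained since X is finite; sup = max *)
Definition maxl (xi : nat -> X) : R := sup (range (fun t => l (xi t))).
(* min over kappa of g(xi(kappa)) -- attained; inf = min *)
Definition ming (xi : nat -> X) : R := inf (range (fun t => g (xi t))).

(* v*_RAA(x) = max over u in U^N of min{max l, min g}; attained (finitely many values) *)
Definition vRAA (x : X) : R :=
  sup (range (fun u : nat -> U => Num.min (maxl (traj x u)) (ming (traj x u)))).

Fixpoint aug_traj (pib : X -> R -> R -> U) (x : X) (t : nat) : X * R * R :=
  match t with
  | 0 => (x, l x, g x)
  | t'.+1 =>
      let: (xt, yt, zt) := aug_traj pib x t' in
      let xn := f xt (pib xt yt zt) in
      (xn, Num.max (l xn) yt, Num.min (g xn) zt)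
  end.

Definition aug_xi (pib : X -> R -> R -> U) (x : X) (t : nat) : X :=
  (aug_traj pib x t).1.1.

End RAA.

From HB Require Import structures.
From mathcomp Require Import all_boot all_order all_algebra.
From mathcomp Require Import all_classical all_reals.
Import Order.TTheory GRing.Theory Num.Theory.
Local Open Scope ring_scope.
Local Open Scope classical_set_scope.

(* Augment the state with the running maximum y of l and the running minimum z
   of g, and let V(x, y, z) be the best value of min{max(y, max l), min(z, min g)}.
   Every payoff is built from finitely many numbers, so V is attained, and
   playing the first action of an optimal control keeps V unchanged.  Invariance
   of V protects the avoid part (V <= z at all times) but not the reach part,
   which an optimal control might postpone forever; so the policy plays an
   optimal control that raises y to V in the fewest steps.  That number of steps
   strictly decreases along the closed loop as long as y < V, hence y eventually
   reaches V. *)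

Lemma exists_range_max {d} {T : orderType d} {I : Type} {J : finType}
    {F : I -> T} (h : J -> T) :
  I -> range F `<=` range h -> exists i, forall j, (F j <= F i)%O.
Proof.
move=> i0 Fh; have [j0 _ hj0] := Fh _ (imageT F i0).
pose P j := `[< range F (h j) >].
have Pj0 : P j0 by apply/asboolP; rewrite hj0; exact: imageT.
have [j /asboolP [i _ Fi] jmax] := arg_maxP h Pj0.
exists i => k; rewrite Fi; have [j' _ hj'] := Fh _ (imageT F k).
by rewrite -hj'; apply: jmax; apply/asboolP; rewrite hj'; exact: imageT.
Qed.

Lemma exists_range_min {d} {T : orderType d} {I : Type} {J : finType}
    {F : I -> T} (h : J -> T) :
  I -> range F `<=` range h -> exists i, forall j, (F i <= F j)%O.
Proof. exact: (@exists_range_max _ T^d). Qed.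

Lemma sup_range_max (R : realType) (I : Type) (F : I -> R) (i : I) :
  (forall j, F j <= F i) -> sup (range F) = F i.
Proof.
move=> Fi; apply/le_anti/andP; split.
  by apply: ge_sup; [exists (F i), i | move=> _ [j _ <-]].
by apply: ub_le_sup; [exists (F i) => _ [j _ <-] | exact: imageT].
Qed.

Lemma inf_range_min (R : realType) (I : Type) (F : I -> R) (i : I) :
  (forall j, F i <= F j) -> inf (range F) = F i.
Proof.
move=> Fi; apply/le_anti/andP; split.
  by apply: ge_inf; [exists (F i) => _ [j _ <-] | exact: imageT].
by apply: lb_le_inf; [exists (F i), i | move=> _ [j _ <-]].
Qed.

Lemma nat_descent {P : nat -> Prop} (m : nat -> nat) :
  (forall t, ~ P t -> (m t.+1 < m t)%N) -> exists t, P t.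
Proof.
move=> desc; apply: contrapT => noP.
have bound t : (m t + t <= m 0%N)%N.
  elim: t => [|t IH]; first by rewrite addn0.
  by rewrite addnS (leq_trans _ IH) // ltn_add2r desc // => Pt; apply: noP; exists t.
by have := bound (m 0%N).+1; rewrite addnS ltnNge leq_addl.
Qed.

Section ReachAlwaysAvoid.
Context {R : realType} {X U : finType} (f : X -> U -> X) (l g : X -> R).

Lemma maxl_attained (xi : nat -> X) :
  exists2 t, maxl l xi = l (xi t) & forall s, l (xi s) <= l (xi t).
Proof.
have [t tmax] : exists t, forall s, l (xi s) <= l (xi t).
  by apply: (exists_range_max l 0%N) => _ [s _ <-]; exact: imageT.
by exists t => //; exact: sup_range_max.
Qed.

Lemma ming_attained (xi : nat -> X) :
  exists2 t, ming g xi = g (xi t) & forall s, g (xi t) <= g (xi s).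
Proof.
have [t tmin] : exists t, forall s, g (xi t) <= g (xi s).
  by apply: (exists_range_min g 0%N) => _ [s _ <-]; exact: imageT.
by exists t => //; exact: inf_range_min.
Qed.

Lemma maxl_ub (xi : nat -> X) t : l (xi t) <= maxl l xi.
Proof. by have [s -> smax] := maxl_attained xi. Qed.

Lemma ming_lb (xi : nat -> X) t : ming g xi <= g (xi t).
Proof. by have [s -> smin] := ming_attained xi. Qed.

Definition ushift (u : nat -> U) : nat -> U := fun t => u t.+1.

Definition ucons (a : U) (u : nat -> U) : nat -> U :=
  fun t => if t is s.+1 then u s else a.

Lemma traj_shift x u t : traj f x u t.+1 = traj f (f x (u 0%N)) (ushift u) t.
Proof. by elim: t => [|t /= <-]. Qed.

Lemma maxl_shift x u :
  maxl l (traj f x u) = Num.max (l x) (maxl l (traj f (f x (u 0%N)) (ushift u))).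
Proof.
apply/le_anti/andP; split.
  have [[|t] -> _] := maxl_attained (traj f x u); first by rewrite le_max lexx.
  by rewrite traj_shift le_max maxl_ub orbT.
rewrite ge_max (maxl_ub _ 0%N) /=.
have [t -> _] := maxl_attained (traj f (f x (u 0%N)) (ushift u)).
by rewrite -traj_shift maxl_ub.
Qed.

Lemma ming_shift x u :
  ming g (traj f x u) = Num.min (g x) (ming g (traj f (f x (u 0%N)) (ushift u))).
Proof.
apply/le_anti/andP; split; last first.
  have [[|t] -> _] := ming_attained (traj f x u); first by rewrite ge_min lexx.
  by rewrite traj_shift ge_min ming_lb orbT.
rewrite le_min (ming_lb _ 0%N) /=.
have [t -> _] := ming_attained (traj f (f x (u 0%N)) (ushift u)).
by rewrite -traj_shift ming_lb.
Qed.

Definition payoff x (y z : R) (u : nat -> U) : R :=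
  Num.min (Num.max y (maxl l (traj f x u))) (Num.min z (ming g (traj f x u))).

Definition value x (y z : R) : R := sup (range (payoff x y z)).

Definition next_y x (y : R) a : R := Num.max (l (f x a)) y.

Definition next_z x (z : R) a : R := Num.min (g (f x a)) z.

Lemma payoff_init x u :
  payoff x (l x) (g x) u = Num.min (maxl l (traj f x u)) (ming g (traj f x u)).
Proof. by rewrite /payoff (max_r (maxl_ub _ 0%N)) (min_r (ming_lb _ 0%N)). Qed.

Lemma payoff_shift x y z u : l x <= y -> z <= g x ->
  payoff x y z u =
  payoff (f x (u 0%N)) (next_y x y (u 0%N)) (next_z x z (u 0%N)) (ushift u).
Proof.
move=> lxy zgx; rewrite /payoff /next_y /next_z maxl_shift ming_shift.
have lx1 := maxl_ub (traj f (f x (u 0%N)) (ushift u)) 0%N.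
have gx1 := ming_lb (traj f (f x (u 0%N)) (ushift u)) 0%N.
rewrite /= in lx1 gx1; congr Num.min.
  by rewrite maxA (max_l lxy) [Num.max _ y]maxC -maxA (max_r lx1).
by rewrite minA (min_l zgx) [Num.min _ z]minC -minA (min_r gx1).
Qed.

Context (u0 : U).

Lemma value_attained x y z :
  exists2 u, value x y z = payoff x y z u & forall v, payoff x y z v <= payoff x y z u.
Proof.
pose h (p : X * X) := Num.min (Num.max y (l p.1)) (Num.min z (g p.2)).
have [u umax] : exists u, forall v, payoff x y z v <= payoff x y z u.
  apply: (exists_range_max h (fun _ => u0)) => _ [v _ <-]; rewrite /payoff.
  have [t -> _] := maxl_attained (traj f x v).
  have [k -> _] := ming_attained (traj f x v).
  exact: (imageT h (traj f x v t, traj f x v k)).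
by exists u => //; exact: sup_range_max.
Qed.

Lemma payoff_le_value x y z u : payoff x y z u <= value x y z.
Proof. by have [v -> vmax] := value_attained x y z. Qed.

Lemma value_le_z x y z : value x y z <= z.
Proof. by have [u -> _] := value_attained x y z; rewrite /payoff !ge_min lexx !orbT. Qed.

Lemma value_shift_optimal x y z u : l x <= y -> z <= g x ->
  payoff x y z u = value x y z ->
  value (f x (u 0%N)) (next_y x y (u 0%N)) (next_z x z (u 0%N)) = value x y z.
Proof.
move=> lxy zgx uopt; apply/le_anti/andP; split.
  have [v -> _] := value_attained (f x (u 0%N)) (next_y x y (u 0%N)) (next_z x z (u 0%N)).
  by rewrite -[v]/(ushift (ucons (u 0%N) v)) -payoff_shift // payoff_le_value.
by rewrite -uopt payoff_shift // payoff_le_value.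
Qed.

Definition reaches_within x y z (u : nat -> U) (n : nat) : Prop :=
  exists2 i, (i <= n)%N & value x y z <= Num.max y (l (traj f x u i)).

Definition optimal_reach x y z (n : nat) : bool :=
  `[< exists2 u, payoff x y z u = value x y z & reaches_within x y z u n >].

Lemma exists_optimal_reach x y z : exists n, optimal_reach x y z n.
Proof.
have [u Vu _] := value_attained x y z; have [t Mt _] := maxl_attained (traj f x u).
exists t; apply/asboolP; exists u => //; exists t => //.
by rewrite Vu -Mt /payoff ge_min lexx.
Qed.

Definition reach_time x y z : nat := ex_minn (exists_optimal_reach x y z).

Lemma exists_fast_optimal x y z :
  exists u, payoff x y z u = value x y z /\ reaches_within x y z u (reach_time x y z).
Proof. by rewrite /reach_time; case: ex_minnP => n /asboolP [u ? ?] _; exists u. Qed.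

Lemma reach_time_min x y z u n :
  payoff x y z u = value x y z -> reaches_within x y z u n -> (reach_time x y z <= n)%N.
Proof.
move=> uopt ureach; rewrite /reach_time; case: ex_minnP => m _; apply.
by apply/asboolP; exists u.
Qed.

Lemma reach_time_shift x y z u n : l x <= y -> z <= g x -> y < value x y z ->
  payoff x y z u = value x y z -> reaches_within x y z u n ->
  (reach_time (f x (u 0%N)) (next_y x y (u 0%N)) (next_z x z (u 0%N)) < n)%N.
Proof.
move=> lxy zgx yV uopt [[|i] le_in Vi].
  by move: Vi; rewrite /= (max_l lxy) => /(lt_le_trans yV); rewrite ltxx.
apply: leq_ltn_trans le_in; apply: (reach_time_min _ _ _ (ushift u)).
  by rewrite -payoff_shift // value_shift_optimal.
exists i => //; rewrite value_shift_optimal //; apply: (le_trans Vi).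
by rewrite traj_shift /next_y ge_max !le_max !lexx !orbT.
Qed.

Definition fast_control x y z : nat -> U := proj1_sig (cid (exists_fast_optimal x y z)).

Lemma fast_control_optimal x y z : payoff x y z (fast_control x y z) = value x y z.
Proof. exact: (proj2_sig (cid (exists_fast_optimal x y z))).1. Qed.

Lemma fast_control_reaches x y z :
  reaches_within x y z (fast_control x y z) (reach_time x y z).
Proof. exact: (proj2_sig (cid (exists_fast_optimal x y z))).2. Qed.

Definition raa_policy x (y z : R) : U := fast_control x y z 0%N.

Definition aug_y (pib : X -> R -> R -> U) x t : R := (aug_traj f l g pib x t).1.2.

Definition aug_z (pib : X -> R -> R -> U) x t : R := (aug_traj f l g pib x t).2.

Definition closed_loop_control (pib : X -> R -> R -> U) x : nat -> U :=
  fun t => pib (aug_xi f l g pib x t) (aug_y pib x t) (aug_z pib x t).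

Section ClosedLoop.
Context (pib : X -> R -> R -> U) (x : X).
Local Notation xs := (aug_xi f l g pib x).
Local Notation ys := (aug_y pib x).
Local Notation zs := (aug_z pib x).
Local Notation us := (closed_loop_control pib x).

Lemma aug_xiS t : xs t.+1 = f (xs t) (us t).
Proof.
rewrite /closed_loop_control /aug_xi /aug_y /aug_z /=.
by case: (aug_traj f l g pib x t) => [[]].
Qed.

Lemma aug_yS t : ys t.+1 = next_y (xs t) (ys t) (us t).
Proof.
rewrite /closed_loop_control /aug_xi /aug_y /aug_z /=.
by case: (aug_traj f l g pib x t) => [[]].
Qed.

Lemma aug_zS t : zs t.+1 = next_z (xs t) (zs t) (us t).
Proof.
rewrite /closed_loop_control /aug_xi /aug_y /aug_z /=.
by case: (aug_traj f l g pib x t) => [[]].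
Qed.

Lemma l_le_aug_y t : l (xs t) <= ys t.
Proof. by case: t => [|t] //; rewrite aug_yS aug_xiS le_max lexx. Qed.

Lemma aug_z_le_g t : zs t <= g (xs t).
Proof. by case: t => [|t] //; rewrite aug_zS aug_xiS ge_min lexx. Qed.

Lemma aug_y_le_maxl t : ys t <= maxl l xs.
Proof.
elim: t => [|t IH]; first exact: (maxl_ub xs 0%N).
by rewrite aug_yS /next_y -aug_xiS ge_max maxl_ub IH.
Qed.

Lemma traj_closed_loop : traj f x us = xs.
Proof. by apply: funext; elim=> [|t IH] //=; rewrite IH aug_xiS. Qed.

End ClosedLoop.

Lemma value_closed_loop x t :
  value (aug_xi f l g raa_policy x t) (aug_y raa_policy x t) (aug_z raa_policy x t) =
  value x (l x) (g x).
Proof.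
elim: t => [|t <-] //; rewrite aug_xiS aug_yS aug_zS.
apply: value_shift_optimal; first exact: l_le_aug_y; first exact: aug_z_le_g.
exact: fast_control_optimal.
Qed.

Lemma closed_loop_reaches x : exists t, value x (l x) (g x) <= aug_y raa_policy x t.
Proof.
pose xs := aug_xi f l g raa_policy x; pose ys := aug_y raa_policy x.
pose zs := aug_z raa_policy x; pose m t := reach_time (xs t) (ys t) (zs t).
apply: (nat_descent m) => t /negP; rewrite -ltNge -(value_closed_loop x t) => yV.
rewrite /m /xs /ys /zs aug_xiS aug_yS aug_zS.
exact: (reach_time_shift _ _ _ (fast_control (xs t) (ys t) (zs t)) _ (l_le_aug_y _ _ t)
  (aug_z_le_g _ _ t) yV (fast_control_optimal _ _ _) (fast_control_reaches _ _ _)).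
Qed.

Lemma vRAA_value x : vRAA f l g x = value x (l x) (g x).
Proof. by rewrite /vRAA /value (funext (payoff_init x)). Qed.

End ReachAlwaysAvoid.

Theorem mainTheorem9 (R : realType) (X U : finType) (f : X -> U -> X) (l g : X -> R) :
  (0 < #|X|)%N -> (0 < #|U|)%N ->
  exists pib : X -> R -> R -> U,
    forall x : X,
      vRAA f l g x =
      Num.min (maxl l (aug_xi f l g pib x)) (ming g (aug_xi f l g pib x)).
Proof.
move=> _ /card_gt0P [u0 _]; exists (raa_policy f l g u0) => x.
rewrite vRAA_value; apply/le_anti/andP; split.
  rewrite le_min; apply/andP; split.
    have [t Vy] := closed_loop_reaches f l g u0 x.
    exact: le_trans Vy (aug_y_le_maxl f l g _ x t).
  have [t -> _] := ming_attained g (aug_xi f l g (raa_policy f l g u0) x).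
  rewrite -(value_closed_loop f l g u0 x t).
  exact: le_trans (value_le_z f l g u0 _ _ _) (aug_z_le_g f l g _ x t).
rewrite -traj_closed_loop -payoff_init; exact: payoff_le_value.
Qed.
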